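(* For every integer $k\ge 0$ there is a wall on $k$ colors whose graph has clique size $k$.
   Context: An interval graph $G=(V,E)$ comes with an interval representation $v\mapsto I_v$ (intervals of $\mathbb{R}$, distinct $u,v$ adjacent iff $I_u\cap I_v\ne\emptyset$); graphs are finite. $N[v]$ is the closed neighborhood of $v$ and $f(U)$ the image of $U$. A wall is a pair $(G,f)$ where $G$ is an interval graph on vertex set $V$ with a given interval representation, $f\colon V\to\{1,2,\dots\}$ is a proper coloring of $G$, and $f(N[v])\supseteq\{1,\dots,f(v)\}$ for every $v\in V$. It is a wall on $t$ colors if $|f(V)|=t$; its clique size is the clique number of $G$. *)

From Stdlib Require Import Reals.
From mathcomp Require Import all_boot.
Set Implicit Arguments. Unset Strict Implicit. Unset Printing Implicit Defensive.

Definition is_interval (I : R -> Prop) : Prop :=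
  (exists x, I x) /\
  (forall x y z : R, I x -> I z -> Rle x y -> Rle y z -> I y).

Definition iadj (V : finType) (I : V -> R -> Prop) (u v : V) : Prop :=
  u <> v /\ exists x, I u x /\ I v x.

Definition is_clique (V : finType) (I : V -> R -> Prop) (Q : {set V}) : Prop :=
  forall u v, u \in Q -> v \in Q -> u <> v -> iadj I u v.

Definition clique_number (V : finType) (I : V -> R -> Prop) (k : nat) : Prop :=
  (exists Q : {set V}, is_clique I Q /\ #|Q| = k) /\
  (forall Q : {set V}, is_clique I Q -> #|Q| <= k).

Definition ncolors (V : finType) (f : V -> nat) : nat :=
  size (undup [seq f v | v <- enum V]).

(* (G, f) is a wall, where G is the interval graph with representation I. *)
Definition is_wall (V : finType) (I : V -> R -> Prop) (f : V -> nat) : Prop :=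
  [/\ (forall v, is_interval (I v)),
      (forall v, 0 < f v),
      (forall u v, iadj I u v -> f u <> f v)
    & (forall v c, 1 <= c <= f v ->
         exists u, (u = v \/ iadj I u v) /\ f u = c)].

From Stdlib Require Import Reals.
From mathcomp Require Import all_boot.

(* Every vertex represented by the whole line gives the complete graph on [V];
   colouring the k vertices of K_k with 1, ..., k is then a wall. *)

Definition whole_line {V : finType} : V -> R -> Prop := fun _ _ => True.

Lemma is_interval_whole_line (V : finType) (v : V) : is_interval (whole_line v).
Proof. by split; [exists R0|]. Qed.

Lemma iadj_whole_line (V : finType) (u v : V) : iadj (@whole_line V) u v <-> u <> v.
Proof. by split=> [[]|uv] //; split=> //; exists R0. Qed.

Lemma clique_number_whole_line (V : finType) : clique_number (@whole_line V) #|V|.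
Proof.
split=> [|Q _]; last exact: max_card.
by exists setT; split=> [u v _ _|]; [rewrite iadj_whole_line | rewrite cardsT].
Qed.

Lemma ncolors_inj (V : finType) (f : V -> nat) : injective f -> ncolors f = #|V|.
Proof.
move=> f_inj; rewrite /ncolors undup_id ?(map_inj_uniq f_inj) ?enum_uniq //.
by rewrite size_map cardT.
Qed.

Lemma ord_succ_inj (k : nat) : injective (fun i : 'I_k => i.+1).
Proof. by move=> i j [] /val_inj. Qed.

Lemma wall_whole_line_ord (k : nat) :
  is_wall (@whole_line 'I_k) (fun i : 'I_k => i.+1).
Proof.
split=> [v|v|u v /iadj_whole_line uv /ord_succ_inj //|v c /andP[c_gt0 c_le]].
- exact: is_interval_whole_line.
- by [].
have c_lt : c.-1 < k by rewrite prednK // (leq_trans c_le (ltn_ord v)).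
exists (Ordinal c_lt); split; last by rewrite /= prednK.
have [->|uv] := eqVneq (Ordinal c_lt) v; first by left.
by right; apply/iadj_whole_line => /eqP; rewrite (negbTE uv).
Qed.

Theorem mainTheorem4 :
  forall k : nat,
    exists (V : finType) (I : V -> R -> Prop) (f : V -> nat),
      is_wall I f /\ ncolors f = k /\ clique_number I k.
Proof.
move=> k; exists 'I_k, (@whole_line 'I_k), (fun i : 'I_k => i.+1).
split; first exact: wall_whole_line_ord.
rewrite ncolors_inj ?card_ord; last exact: ord_succ_inj.
by split=> //; rewrite -[X in clique_number _ X]card_ord;
  exact: clique_number_whole_line.
Qed.
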